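(* Let $G$ be a finite abelian group, $k\ge1$, $\Gamma=G\wr\mathbb{Z}^k=\Sigma\rtimes_\alpha\mathbb{Z}^k$, and $\varphi$ an automorphism of $\Gamma$ with restriction $\varphi'=\varphi|_\Sigma$ and induced automorphism $\overline{\varphi}$ of $\Gamma/\Sigma\cong\mathbb{Z}^k$. Let $\varphi_1:\Gamma\to\Gamma$ be defined by $\varphi_1(hm)=\varphi'(h)\overline{\varphi}(m)$ for $h\in\Sigma$, $m\in\mathbb{Z}^k$. Then $\varphi_1$ is an automorphism of $\Gamma$ and $R(\varphi)=R(\varphi_1)$.
   Context: Reidemeister number $R(\psi)$: number of classes of the relation $x\sim gx\psi(g^{-1})$, $g\in\Gamma$ (possibly $\infty$). $\Sigma=\bigoplus_{x\in\mathbb{Z}^k}G_x$, $G_x\cong G$, $\alpha(x)(g_y)=g_{x+y}$; $\Sigma$ is the torsion subset of $\Gamma$ and hence $\varphi$-invariant. *)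

From mathcomp Require Import all_boot all_order all_algebra.
Set Implicit Arguments. Unset Strict Implicit. Unset Printing Implicit Defensive.
Import Order.TTheory GRing.Theory Num.Theory.
Local Open Scope ring_scope.

Notation Zk k := 'rV[int]_k.

(* finitely supported maps Z^k -> G  (elements of Sigma = (+)_{x in Z^k} G_x) *)
Definition finsupp (G : zmodType) (k : nat) (h : Zk k -> G) : Prop :=
  exists s : seq (Zk k), forall x, h x != 0 -> x \in s.

(* Gamma = G wr Z^k = Sigma x|_alpha Z^k, an element h m stored as (lamp, pos),
   with alpha(x)(g_y) = g_{x+y}, i.e. (alpha m h) y = h (y - m). *)
Record wreath (G : finZmodType) (k : nat) := Wr {
  lamp : Zk k -> G;
  pos : Zk k;
  lampP : finsupp lamp }.

Section Wreath.
Variables (G : finZmodType) (k : nat).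

Lemma finsupp_mul (h1 h2 : Zk k -> G) (m : Zk k) :
  finsupp h1 -> finsupp h2 -> finsupp (fun y => h1 y + h2 (y - m)).
Proof.
move=> [s1 H1] [s2 H2]; exists (s1 ++ map (fun z => z + m) s2) => x Hx.
rewrite mem_cat; case E1: (h1 x == 0).
  move/eqP: E1 => E1; move: Hx; rewrite E1 add0r => /H2 Hm.
  apply/orP; right; apply/mapP; exists (x - m) => //; by rewrite subrK.
by move/negbT: E1 => /H1 ->.
Qed.

Lemma finsupp_inv (h : Zk k -> G) (m : Zk k) :
  finsupp h -> finsupp (fun y => - h (y + m)).
Proof.
move=> [s H]; exists (map (fun z => z - m) s) => x; rewrite oppr_eq0 => /H Hx.
by apply/mapP; exists (x + m) => //; rewrite addrK.
Qed.

Lemma finsupp0 : finsupp (fun _ : Zk k => (0 : G)).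
Proof. by exists [::] => x; rewrite eqxx. Qed.

(* (h1, m1) (h2, m2) = (h1 + alpha(m1) h2, m1 + m2) *)
Definition wr_mul (a b : wreath G k) : wreath G k :=
  @Wr G k _ (pos a + pos b) (finsupp_mul (pos a) (lampP a) (lampP b)).

Definition wr_one : wreath G k := @Wr G k _ 0 finsupp0.

Definition wr_inv (a : wreath G k) : wreath G k :=
  @Wr G k _ (- pos a) (finsupp_inv (pos a) (lampP a)).

Definition wr_sigma (a : wreath G k) : wreath G k := @Wr G k _ 0 (lampP a).

Definition wr_Zk (m : Zk k) : wreath G k := @Wr G k _ m finsupp0.

Definition is_aut (phi : wreath G k -> wreath G k) : Prop :=
  bijective phi /\ forall a b, phi (wr_mul a b) = wr_mul (phi a) (phi b).

(* phi_1 (h m) = phi'(h) phibar(m), where phi' = phi|_Sigma and phibar is the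
   automorphism induced on Gamma/Sigma = Z^k (the quotient map being [pos]). *)
Definition phi1 (phi : wreath G k -> wreath G k) (a : wreath G k) : wreath G k :=
  wr_mul (phi (wr_sigma a)) (wr_Zk (pos (phi (wr_Zk (pos a))))).

Definition twisted_conj (psi : wreath G k -> wreath G k) (x y : wreath G k) : Prop :=
  exists g, y = wr_mul (wr_mul g x) (psi (wr_inv g)).

(* R(psi) = n : there are exactly n Reidemeister classes.
   R(psi) = infinity corresponds to: no n with reid_number_is psi n. *)
Definition reid_number_is (psi : wreath G k -> wreath G k) (n : nat) : Prop :=
  exists f : 'I_n -> wreath G k,
    (forall i j, twisted_conj psi (f i) (f j) -> i = j) /\
    (forall x, exists i, twisted_conj psi x (f i)).

End Wreath.

From HB Require Import structures.
From mathcomp Require Import all_boot all_order all_algebra fingroup cyclic.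
From mathcomp Require Import boolp.
Set Implicit Arguments. Unset Strict Implicit. Unset Printing Implicit Defensive.
Import Order.TTheory GRing.Theory Num.Theory.
Local Open Scope ring_scope.

(* An automorphism phi of Gamma maps the torsion subgroup Sigma into itself,
   so it induces phibar on Gamma/Sigma = Z^k, and phi g = d (pos g) * phi1 g
   where d v ([cocycle]) is the Sigma-part of phi v; d is a cocycle for the
   action of Z^k on Sigma through phibar, hence phi1 is a morphism.
   Twisted conjugation by g shifts positions by (1 - phibar) (pos g)
   ([phishift]). If 1 - phibar is not injective, its image has infinite index
   in Z^k (an integer matrix whose image has finite index has nonzero
   determinant), so neither phi nor phi1 has finitely many Reidemeister
   classes. Otherwise 1 - phibar admits a coordinate nu with
   nu (m + (1 - phibar) n) = nu m + n, and the gauge transformation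
   x |-> x * d (nu (pos x)) is a bijection of Gamma carrying the phi-classes
   onto the phi1-classes. *)

Section FiniteCokernel.
Variables (k : nat) (L : {additive 'rV[int]_k -> 'rV[int]_k}).

Definition additive_mx : 'M[int]_k := \matrix_i L (delta_mx 0 i).

Lemma additive_mxE v : L v = v *m additive_mx.
Proof.
rewrite {1}(row_sum_delta v) raddf_sum mulmx_sum_row; apply: eq_bigr => i _.
by rewrite rowK -[v 0 i]intz !scaler_int raddfMz.
Qed.

Variables (n : nat) (p : 'I_n -> 'rV[int]_k).
Hypothesis cosets_cover : forall v, exists i, exists u, v = p i + L u.

Lemma multiple_in_image (i : 'I_k) :
  exists Nu : int * 'rV[int]_k, Nu.1 != 0 /\ L Nu.2 = Nu.1 *: delta_mx 0 i.
Proof.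
(* pigeonhole: two of the n + 1 multiples j e_i lie in the same coset *)
have /fin_all_exists[c cP] (j : 'I_n.+1) :
    exists c, exists u, j%:Z *: delta_mx 0 i = p c + L u by exact: cosets_cover.
have /injectivePn[j1 [j2 neq_j Ec]] : ~~ injectiveb c.
  by apply/negP => /injectiveP/leq_card; rewrite !card_ord ltnn.
have [[u1 E1] [u2 E2]] := (cP j1, cP j2).
exists (j1%:Z - j2%:Z, u1 - u2); split=> /=.
  by rewrite subr_eq0; apply: contra neq_j => /eqP[/val_inj->].
by rewrite raddfB scalerBl E1 E2 Ec opprD addrACA addrN add0r.
Qed.

Lemma finite_coker_inj : injective L.
Proof.
have /fin_all_exists[Nu NuP] := multiple_in_image.
pose B : 'M[int]_k := \matrix_i (Nu i).2.
have BA : B *m additive_mx = diag_mx (\row_i (Nu i).1).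
  apply/row_matrixP => i; rewrite row_mul rowK -additive_mxE row_diag_mx mxE.
  by case: (NuP i).
have detA : \det additive_mx != 0.
  have : \det (B *m additive_mx) != 0.
    by rewrite BA det_diag; apply/prodf_neq0 => i _; rewrite mxE; case: (NuP i).
  by rewrite det_mulmx mulf_eq0 negb_or => /andP[].
apply: raddf_inj => v; rewrite additive_mxE => Av0.
have : v *m (additive_mx *m \adj additive_mx) = 0 by rewrite mulmxA Av0 mul0mx.
rewrite mul_mx_adj mul_mx_scalar => /eqP; rewrite scalemx_eq0.
by rewrite (negbTE detA) => /eqP.
Qed.

End FiniteCokernel.

Lemma coset_coordinate (U V : zmodType) (L : {additive U -> V}) :
  injective L -> exists nu : V -> U, forall m n, nu (m + L n) = nu m + n.
Proof.
move=> Linj.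
pose in_coset m r := `[< exists n, m = r + L n >].
have has_rep m : exists r, in_coset m r.
  by exists m; apply/asboolP; exists 0; rewrite raddf0 addr0.
pose rep m := xchoose (has_rep m).
have rep_shift m n : rep (m + L n) = rep m.
  apply: eq_xchoose => r; apply/asboolP/asboolP => -[n' E].
    by exists (n' - n); rewrite raddfB addrA -E addrK.
  by exists (n' + n); rewrite E raddfD addrA.
have coord_ex m : exists n, m == rep m + L n.
  by have /asboolP[n /eqP] := xchooseP (has_rep m); exists n.
pose nu m := xchoose (coord_ex m).
have nuP m : m = rep m + L (nu m) by exact/eqP/(xchooseP (coord_ex m)).
exists nu => m n; apply: Linj.
have := nuP (m + L n); rewrite rep_shift {1}(nuP m) -addrA -raddfD.
by move=> /addrI.
Qed.

Lemma mulrn_card_eq0 (U : finZmodType) (x : U) : x *+ #|U| = 0.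
Proof. by rewrite -FinRing.zmodXgE -cardsT expg_cardG ?inE. Qed.

Lemma rV_int_torsion_free (k n : nat) (v : 'rV[int]_k) :
  (0 < n)%N -> v *+ n = 0 -> v = 0.
Proof.
move=> n_gt0 /eqP; rewrite -scaler_nat scalemx_eq0 pnatr_eq0.
by rewrite gtn_eqF // => /eqP.
Qed.

Section WreathGroup.
Variables (G : finZmodType) (k : nat).
Local Notation W := (wreath G k).
Local Notation tr := (@wr_Zk G k).

Lemma wreath_eq (a b : W) : lamp a =1 lamp b -> pos a = pos b -> a = b.
Proof.
case: a b => la pa ha [lb pb hb] /= /funext Ela Ep; subst.
by congr Wr; exact: Prop_irrelevance.
Qed.

Lemma wr_mulA : associative (@wr_mul G k).
Proof.
by move=> a b c; apply: wreath_eq => /= [y|]; rewrite !addrA // opprD addrA.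
Qed.

Lemma wr_mul1g : left_id (@wr_one G k) (@wr_mul G k).
Proof. by move=> a; apply: wreath_eq => /= [y|]; rewrite add0r // subr0. Qed.

Lemma wr_mulg1 : right_id (@wr_one G k) (@wr_mul G k).
Proof. by move=> a; apply: wreath_eq => /= [y|]; rewrite addr0. Qed.

Lemma wr_mulVg : left_inverse (@wr_one G k) (@wr_inv G k) (@wr_mul G k).
Proof.
by move=> a; apply: wreath_eq => /= [y|]; rewrite ?addNr // opprK addNr.
Qed.

Lemma wr_mulgV : right_inverse (@wr_one G k) (@wr_inv G k) (@wr_mul G k).
Proof.
by move=> a; apply: wreath_eq => /= [y|]; rewrite ?addrN // subrK addrN.
Qed.

HB.instance Definition _ := gen_eqMixin W.
HB.instance Definition _ := gen_choiceMixin W.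
HB.instance Definition _ :=
  isGroup.Build W wr_mulA wr_mul1g wr_mulg1 wr_mulVg wr_mulgV.

Local Open Scope group_scope.
Implicit Types (a b c g s t x : W) (u v : Zk k).

Lemma wr_mulE a b : wr_mul a b = a * b. Proof. by []. Qed.
Lemma wr_invE a : wr_inv a = a^-1. Proof. by []. Qed.

Lemma posM a b : pos (a * b) = pos a + pos b. Proof. by []. Qed.
Lemma posV a : pos a^-1 = - pos a. Proof. by []. Qed.

Lemma posX a n : pos (a ^+ n) = pos a *+ n.
Proof. by elim: n => [|n IHn]; rewrite ?expgS ?mulrS ?posM ?IHn. Qed.

Lemma lampX a n : pos a = 0 -> lamp (a ^+ n) =1 (fun y => lamp a y *+ n).
Proof.
by move=> a0; elim: n => [|n IHn] y; rewrite ?expgS ?mulrS //= a0 subr0 IHn.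
Qed.

Lemma expg_card_sigma a : pos a = 0 -> a ^+ #|G| = 1.
Proof.
move=> a0; apply: wreath_eq => [y|]; last by rewrite posX a0 mul0rn.
by rewrite lampX // mulrn_card_eq0.
Qed.

Lemma wr_ZkD u v : tr (u + v) = tr u * tr v.
Proof. by apply: wreath_eq => /= [y|]; rewrite ?addr0. Qed.

Lemma wr_Zk0 : tr 0 = 1. Proof. exact: wreath_eq. Qed.

Lemma wr_ZkN v : tr (- v) = (tr v)^-1.
Proof. by apply/esym/mulg1_eq; rewrite -wr_ZkD addrN wr_Zk0. Qed.

Lemma wr_sigma_Zk a : wr_sigma a * tr (pos a) = a.
Proof. by apply: wreath_eq => /= [y|]; rewrite ?addr0 ?add0r. Qed.

Lemma sigma_commute s t : pos s = 0 -> pos t = 0 -> commute s t.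
Proof.
by move=> s0 t0; apply: wreath_eq => /= [y|]; rewrite s0 t0 ?subr0 1?addrC.
Qed.

Lemma conjg_sigma s c : pos s = 0 -> s ^ c = s ^ tr (pos c).
Proof.
move=> s0; apply: wreath_eq => /= [y|] //.
by rewrite s0 opprK subr0 oppr0 add0r addr0 addrCA addNr addr0.
Qed.

Lemma wr_sigma_mulZk s v : pos s = 0 -> wr_sigma (s * tr v) = s.
Proof. by move=> s0; apply: wreath_eq => /= [y|]; rewrite ?s0 ?addr0. Qed.

Section Morphism.
Variable phi : W -> W.
Hypothesis phiM : {morph phi : a b / a * b}.

Lemma phi_one : phi 1 = 1.
Proof. by apply: (@mulgI _ (phi 1)); rewrite -phiM !mulg1. Qed.

Lemma phi_inv a : phi a^-1 = (phi a)^-1.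
Proof. by apply/esym/mulg1_eq; rewrite -phiM mulgV phi_one. Qed.

Lemma phi_expg a n : phi (a ^+ n) = phi a ^+ n.
Proof. by elim: n => [|n IHn]; rewrite ?phi_one // !expgS phiM IHn. Qed.

Lemma pos_phi_sigma a : pos a = 0 -> pos (phi a) = 0.
Proof.
move=> a0; apply: (@rV_int_torsion_free _ #|G|).
  by apply/card_gt0P; exists 0.
by rewrite -posX -phi_expg expg_card_sigma // phi_one.
Qed.

Definition phibar v := pos (phi (tr v)).

Lemma pos_phi a : pos (phi a) = phibar (pos a).
Proof. by rewrite -{1}(wr_sigma_Zk a) phiM posM pos_phi_sigma // add0r. Qed.

Lemma phibarB : {morph phibar : u v / u - v}.
Proof. by move=> u v; rewrite /phibar wr_ZkD wr_ZkN phiM phi_inv. Qed.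

HB.instance Definition _ := GRing.isZmodMorphism.Build _ _ phibar phibarB.

Definition phishift v := v - phibar v.

HB.instance Definition _ := GRing.Additive.copy phishift (idfun \- phibar).

Definition cocycle v := wr_sigma (phi (tr v)).

Lemma phi_Zk v : phi (tr v) = cocycle v * tr (phibar v).
Proof. by rewrite wr_sigma_Zk. Qed.

Lemma phi1E a : phi1 phi a = phi (wr_sigma a) * tr (phibar (pos a)).
Proof. by []. Qed.

Lemma pos_phi1 a : pos (phi1 phi a) = phibar (pos a).
Proof. by rewrite phi1E posM pos_phi_sigma // add0r. Qed.

Lemma cocycleD u v : cocycle (u + v) = cocycle u * cocycle v ^ tr (- phibar u).
Proof.
apply: (@mulIg _ (tr (phibar (u + v)))); rewrite -phi_Zk wr_ZkD phiM !phi_Zk.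
rewrite raddfD wr_ZkD wr_ZkN mulgA -[cocycle u * _ * _]mulgA.
by rewrite [tr _ * cocycle v]conjgCV [cocycle u * (_ * _)]mulgA [RHS]mulgA.
Qed.

Lemma phi_cocycle g : phi g = cocycle (pos g) * phi1 phi g.
Proof.
have sg0 : pos (phi (wr_sigma g)) = 0 by exact: pos_phi_sigma.
rewrite -{1}(wr_sigma_Zk g) phiM phi_Zk phi1E mulgA [RHS]mulgA.
by rewrite (sigma_commute sg0).
Qed.

Lemma phi1M : {morph phi1 phi : a b / a * b}.
Proof.
move=> a b; apply: (@mulgI _ (cocycle (pos (a * b)))).
rewrite -phi_cocycle phiM !phi_cocycle posM cocycleD -mulgA -[RHS]mulgA.
congr (_ * _); rewrite mulgA [RHS]mulgA; congr (_ * _).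
by rewrite conjgCV (conjg_sigma (phi1 phi a)^-1) // posV pos_phi1.
Qed.

Lemma exists_gauge :
  injective phishift ->
  exists e : Zk k -> W, (forall m, pos (e m) = 0) /\
    forall m n, e (m + phishift n) = cocycle n * e m ^ tr (- phibar n).
Proof.
move=> /coset_coordinate[nu nuP]; exists (cocycle \o nu); split=> // m n.
by rewrite /= nuP addrC cocycleD.
Qed.

Lemma reid_number_phishift_inj psi n :
  (forall a, pos (psi a) = phibar (pos a)) -> reid_number_is psi n ->
  injective phishift.
Proof.
move=> pos_psi [r [_ r_cover]].
apply: (@finite_coker_inj _ _ n (fun i => pos (r i))) => v.
have [i [g]] := r_cover (tr v); rewrite !wr_mulE wr_invE => Ei.
exists i, (- pos g); rewrite Ei !posM pos_psi posV /=.
have -> : phishift (- pos g) = - pos g - phibar (- pos g) by [].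
by rewrite addrACA addrN addr0 addrAC addrN add0r.
Qed.

Lemma wr_sigma_phi1 a : wr_sigma (phi1 phi a) = phi (wr_sigma a).
Proof. by rewrite phi1E wr_sigma_mulZk // pos_phi_sigma. Qed.

End Morphism.

Lemma phi1K (phi psi : W -> W) :
  {morph phi : a b / a * b} -> {morph psi : a b / a * b} ->
  cancel phi psi -> cancel (phi1 phi) (phi1 psi).
Proof.
move=> phiM psiM phiK a.
have phibarK : cancel (phibar phi) (phibar psi).
  by move=> v; rewrite -pos_phi // phiK.
by rewrite phi1E wr_sigma_phi1 // phiK pos_phi1 // phibarK wr_sigma_Zk.
Qed.

Section Gauge.
Variable phi : W -> W.
Hypothesis phiM : {morph phi : a b / a * b}.
Variable e : Zk k -> W.
Hypothesis e_sigma : forall m, pos (e m) = 0.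
Hypothesis e_cocycle :
  forall m n,
  e (m + phishift phi n) = cocycle phi n * e m ^ tr (- phibar phi n).

Definition gauge x := x * e (pos x).

Lemma pos_gauge x : pos (gauge x) = pos x.
Proof. by rewrite posM e_sigma addr0. Qed.

Definition ungauge x := x * (e (pos x))^-1.

Lemma gaugeK : cancel gauge ungauge.
Proof. by move=> x; rewrite /ungauge pos_gauge mulgK. Qed.

Lemma ungaugeK : cancel ungauge gauge.
Proof. by move=> x; rewrite /gauge posM posV e_sigma oppr0 addr0 mulgVK. Qed.

Lemma gauge_twist g x : gauge (g^-1 * x * phi g) = g^-1 * gauge x * phi1 phi g.
Proof.
rewrite /gauge.
have -> : pos (g^-1 * x * phi g) = pos x - phishift phi (pos g).
  by rewrite !posM posV pos_phi // addrC addrA /phishift opprB addrC.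
rewrite -{2}[pos x](subrK (phishift phi (pos g))) e_cocycle.
rewrite (phi_cocycle phiM g).
set E := e _.
have pE : phi1 phi g * E = E ^ tr (- phibar phi (pos g)) * phi1 phi g.
  by rewrite conjgCV (conjg_sigma _ (e_sigma _)) posV pos_phi1.
rewrite -(mulgA _ (_ * _) E) -(mulgA (cocycle phi _)) pE.
by set F := _ ^ _; clearbody F; rewrite !mulgA.
Qed.

Lemma twisted_conj_gauge x y :
  twisted_conj phi x y <-> twisted_conj (phi1 phi) (gauge x) (gauge y).
Proof.
have gauge_twistV g z : gauge (g * z * phi g^-1) = g * gauge z * phi1 phi g^-1.
  by have := gauge_twist g^-1 z; rewrite invgK.
split=> -[g Ey]; exists g; rewrite !wr_mulE wr_invE -gauge_twistV in Ey *.
  by rewrite Ey.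
exact: (can_inj gaugeK).
Qed.

End Gauge.

End WreathGroup.

Section ClassCount.
Variable T : Type.

Definition has_n_classes (R : T -> T -> Prop) n :=
  exists r : 'I_n -> T,
    (forall i j, R (r i) (r j) -> i = j) /\ forall x, exists i, R x (r i).

Lemma has_n_classes_transport (R S : T -> T -> Prop) (f g : T -> T) n :
  cancel f g -> cancel g f -> (forall x y, R x y <-> S (f x) (f y)) ->
  has_n_classes R n <-> has_n_classes S n.
Proof.
move=> fK gK RS; split=> -[r [r_inj r_cover]].
  exists (f \o r); split=> [i j /RS/r_inj //|x].
  by have [i /RS] := r_cover (g x); rewrite gK; exists i.
exists (g \o r); split=> [i j /RS|x]; first by rewrite !gK => /r_inj.
by have [i] := r_cover (f x); rewrite -{1}[r i]gK => /RS; exists i.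
Qed.

End ClassCount.

Theorem mainTheorem4 (G : finZmodType) (k : nat) (hk : (0 < k)%N)
  (phi : wreath G k -> wreath G k) (hphi : is_aut phi) :
  is_aut (phi1 phi) /\
  (forall n : nat, reid_number_is phi n <-> reid_number_is (phi1 phi) n).
Proof.
case: hphi => -[psi phiK psiK] phiM.
have psiM : {morph psi : a b / (a * b)%g}.
  by move=> a b; apply: (can_inj phiK); rewrite psiK (phiM (psi a)) !psiK.
split.
  by split; [exists (phi1 psi); exact: phi1K | exact: phi1M].
move=> n.
have [shift_inj | shift_not_inj] := pselect (injective (phishift phi)).
  have [e [e_sigma e_cocycle]] := exists_gauge phiM shift_inj.
  exact: (has_n_classes_transport n (gaugeK e_sigma) (ungaugeK e_sigma)
           (twisted_conj_gauge phiM e_sigma e_cocycle)).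
split=> [/(reid_number_phishift_inj phiM (pos_phi phiM))
        |/(reid_number_phishift_inj phiM (pos_phi1 phiM))] /shift_not_inj[].
Qed.
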